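(* Let $N,N_1,N_2$ be distribution functions such that $N=(N_1+N_2)/2$ and $\mathbf{u}(N_1),\mathbf{u}(N_2)<\infty$. Put ${\scriptstyle\Delta}N=N_1-N$ and $${\scriptstyle\Delta}\mathbf{u}=\int_0^\infty{\scriptstyle\Delta}N(t)\,dt,\qquad \mathbf{u}_{\scriptstyle\Delta}=\int_0^\infty|{\scriptstyle\Delta}N(t)|\,dt,\qquad \mathbf{u}=\mathbf{u}(N).$$ Then $$\mathbf{u}^*(N)-\frac{\mathbf{u}^*(N_1)+\mathbf{u}^*(N_2)}{2}\ge\frac12\cdot\frac{(\mathbf{u}_{\scriptstyle\Delta})^2}{\mathbf{u}}\ge\frac12\cdot\frac{({\scriptstyle\Delta}\mathbf{u})^2}{\mathbf{u}}$$ (whenever $\mathbf{u}>0$, so that the right-hand sides are defined).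
   Context: A distribution function is a nonincreasing function $N:[0,\infty)\to[0,1]$. For such $N$ we set $$\mathbf{u}(N)=\int_0^\infty N(t)\,dt,\qquad \mathbf{u}^*(N)=\int_0^\infty\psi_0(N(t))\,dt,\qquad \psi_0(s)=s\ln(e/s).$$ *)

From HB Require Import structures.
From mathcomp Require Import all_boot all_order all_algebra.
From mathcomp Require Import all_classical all_reals all_analysis.
Set Implicit Arguments. Unset Strict Implicit. Unset Printing Implicit Defensive.
Import Order.TTheory GRing.Theory Num.Theory.
Local Open Scope classical_set_scope.
Local Open Scope ring_scope.

(* A distribution function: nonincreasing N : [0,oo) -> [0,1]
   (represented as a function R -> R whose values off [0,oo) are irrelevant). *)
Definition distribution_function {R : realType} (N : R -> R) : Prop :=
  (forall t, 0 <= t -> 0 <= N t <= 1) /\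
  (forall s t, 0 <= s -> s <= t -> N t <= N s).

(* psi0(s) = s ln(e/s), with psi0(0) = 0 (ln 0 = 0 and 0 * _ = 0 in MathComp). *)
Definition psi0 {R : realType} (s : R) : R := s * ln (expR 1 / s).

Definition uN {R : realType} (N : R -> R) : \bar R :=
  (\int[lebesgue_measure]_(t in `[0%R, +oo[%classic) (N t)%:E)%E.

Definition ustar {R : realType} (N : R -> R) : \bar R :=
  (\int[lebesgue_measure]_(t in `[0%R, +oo[%classic) (psi0 (N t))%:E)%E.

(* Writing m = (a + b) / 2 and a = m (1 + x), b = m (1 - x), the concavity
   defect of psi0 at the midpoint is
     psi0 m - (psi0 a + psi0 b) / 2 = m ((1 + x) ln (1 + x) + (1 - x) ln (1 - x)) / 2
                                   >= m x^2 / 2 = d^2 / (2 m),   d = a - m.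
   By AM-GM, c |d| <= d^2 / (2 m) + c^2 m / 2 for every c >= 0.  Applied with
   a = N1 t, b = N2 t and integrated over [0, +oo[, this gives
     u*(N) - (u*(N1) + u*(N2)) / 2 >= c u_D - c^2 u / 2,
   and the choice c = u_D / u yields u_D^2 / (2 u).  The second inequality is
   just |Delta u| <= u_D. *)

From HB Require Import structures.
From mathcomp Require Import all_boot all_order all_algebra.
From mathcomp Require Import all_classical all_reals all_analysis.
From mathcomp Require Import measurable_realfun ring lra.
Import Order.TTheory GRing.Theory Num.Theory.
Local Open Scope classical_set_scope.
Local Open Scope ring_scope.

Section psi0_defect.
Variable R : realType.
Implicit Types a b c m x y : R.

Lemma ge0_is_derive_le (g dg : R -> R) x : 0 <= x ->
  (forall y, 0 <= y <= x -> is_derive y 1 g (dg y)) ->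
  (forall y, 0 <= y <= x -> 0 <= dg y) -> g 0 <= g x.
Proof.
move=> x0 Dg dg0.
have Dg' y : y \in `]0, x[ -> is_derive y 1 g (dg y).
  by rewrite in_itv => /andP[y0 yx]; apply: Dg; rewrite !ltW.
have [|y /[!in_itv] /dg0 dgy0 gE] := MVT_segment x0 Dg'.
  by apply: derivable_within_continuous => y; rewrite in_itv => /Dg [].
by rewrite -subr_ge0 gE mulr_ge0 // subr0.
Qed.

Lemma is_derive_1D y : is_derive y 1 (fun z : R => 1 + z) 1.
Proof.
have -> : (fun z : R => 1 + z) = cst 1 + id by apply/funext.
by apply: is_derive_eq; rewrite add0r.
Qed.

Lemma is_derive_1B y : is_derive y 1 (fun z : R => 1 - z) (-1).
Proof.
have -> : (fun z : R => 1 - z) = cst 1 - id by apply/funext.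
by apply: is_derive_eq; rewrite sub0r.
Qed.

Lemma is_derive_ln1D y : -1 < y -> is_derive y 1 (fun z => ln (1 + z)) (1 + y)^-1.
Proof.
move=> y1; change (is_derive y 1 (@ln R \o (fun z => 1 + z)) (1 + y)^-1).
apply: is_derive_eq.
  by apply: is_derive1_comp; apply: is_derive1_ln; lra.
by rewrite add0r !mulr1.
Qed.

Lemma is_derive_ln1B y : y < 1 -> is_derive y 1 (fun z => ln (1 - z)) (- (1 - y)^-1).
Proof.
move=> y1; change (is_derive y 1 (@ln R \o (fun z => 1 - z)) (- (1 - y)^-1)).
apply: is_derive_eq.
  by apply: is_derive1_comp; apply: is_derive1_ln; lra.
by rewrite add0r mul1r mulrN1.
Qed.

Lemma ln1D_sub_ln1B_ge x : 0 <= x < 1 -> 2 * x <= ln (1 + x) - ln (1 - x).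
Proof.
move=> /andP[x0 x1].
pose g (z : R) := ln (1 + z) - ln (1 - z) - 2 * z.
pose dg (z : R) := (1 + z)^-1 + (1 - z)^-1 - 2.
suff : g 0 <= g x by rewrite /g addr0 subr0 ln1 mulr0 !subr0 subr_ge0.
apply: (@ge0_is_derive_le g dg x x0) => // y /andP[y0 yx].
  have -> : g = (fun z => ln (1 + z)) - (fun z => ln (1 - z)) - cst 2 * id.
    by apply/funext.
  apply: is_derive_eq.
    apply: is_deriveB; first apply: is_deriveB.
    - by apply: is_derive_ln1D; lra.
    - by apply: is_derive_ln1B; lra.
  by rewrite /dg /GRing.scale /= mulr0 addr0 mulr1 opprK.
have -> : dg y = 2 * y ^+ 2 / ((1 + y) * (1 - y)).
  by rewrite /dg; field; apply/andP; split; apply/eqP; lra.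
by apply: divr_ge0; [nra | apply: mulr_ge0; lra].
Qed.

Lemma sqr_le_entropy1DB x : 0 <= x < 1 ->
  x ^+ 2 <= (1 + x) * ln (1 + x) + (1 - x) * ln (1 - x).
Proof.
move=> /andP[x0 x1].
pose g (z : R) := (1 + z) * ln (1 + z) + (1 - z) * ln (1 - z) - z ^+ 2.
suff : g 0 <= g x.
  by rewrite /g addr0 subr0 ln1 !mulr0 !addr0 expr0n /= subr0 subr_ge0.
pose dg (z : R) := ln (1 + z) - ln (1 - z) - 2 * z.
apply: (@ge0_is_derive_le g dg x x0) => // y /andP[y0 yx]; last first.
  by rewrite subr_ge0 ln1D_sub_ln1B_ge //; lra.
have -> : g = (fun z => 1 + z) * (fun z => ln (1 + z))
   + (fun z => 1 - z) * (fun z => ln (1 - z)) - id ^+ 2 by apply/funext.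
apply: is_derive_eq.
  apply: is_deriveB; first apply: is_deriveD; apply: is_deriveM;
    by [apply: is_derive_1D | apply: is_derive_1B
       | apply: is_derive_ln1D; lra | apply: is_derive_ln1B; lra].
rewrite /dg /GRing.scale /= !mulr1 mulrN !mulfV ?expr1; lra.
Qed.

Lemma half_le_ln2 : 2^-1 <= ln (2 : R).
Proof.
have := @le_ln1Dx R (- 2^-1); rewrite (_ : 1 - 2^-1 = 2^-1); last by field.
by rewrite lnV ?posrE //; lra.
Qed.

Lemma psi0E (s : R) : 0 <= s -> psi0 s = s - s * ln s.
Proof.
rewrite le_eqVlt => /predU1P[<-|s0]; first by rewrite /psi0 !mul0r subr0.
by rewrite /psi0 ln_div ?posrE ?expR_gt0 // expRK mulrBr mulr1.
Qed.

Lemma psi0_ge0 (s : R) : 0 <= s <= 1 -> 0 <= psi0 s.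
Proof. by move=> /andP[s0 s1]; rewrite psi0E //; have := ln_le0 s1; nra. Qed.

Lemma psi0_midpoint_defect_polar m x : 0 < m -> 0 <= x < 1 ->
  m * x ^+ 2 / 2 <= psi0 m - (psi0 (m * (1 + x)) + psi0 (m * (1 - x))) / 2.
Proof.
move=> m0 x01; have := @sqr_le_entropy1DB x x01; case/andP: x01 => x0 x1.
rewrite !psi0E ?mulr_ge0 ?lnM ?posrE; try lra.
nra.
Qed.

Lemma psi0_midpoint_defect a b : 0 <= a -> 0 <= b -> 0 < a + b ->
  (a - (a + b) / 2) ^+ 2 / (a + b) <= psi0 ((a + b) / 2) - (psi0 a + psi0 b) / 2.
Proof.
wlog ba : a b / b <= a.
  move=> wlog_ba a0 b0 ab; have [ba|/ltW ab'] := leP b a; first exact: wlog_ba.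
  have := wlog_ba b a ab' b0 a0; rewrite (addrC b a) (addrC (psi0 b)) => /(_ ab).
  suff -> : (b - (a + b) / 2) ^+ 2 = (a - (a + b) / 2) ^+ 2 by [].
  by rewrite -sqrrN; congr (_ ^+ 2); field.
move=> a0 b0 ab; have [->|b_neq0] := eqVneq b 0.
  (* here x = 1, outside the range of the polar form *)
  rewrite !addr0; have := half_le_ln2.
  rewrite !psi0E ?ln_div ?posrE; try lra.
  rewrite (_ : (a - a / 2) ^+ 2 / a = a / 4); last by field; apply/eqP; lra.
  nra.
have b_gt0 : 0 < b by rewrite lt_def b_neq0.
pose m := (a + b) / 2; pose x := (a - b) / (a + b).
have [aE bE] : a = m * (1 + x) /\ b = m * (1 - x).
  by split; rewrite /m /x; field; apply/eqP; lra.
have x_ge0 : 0 <= x by apply: divr_ge0; lra.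
have x_lt1 : x < 1 by rewrite ltr_pdivrMr //; lra.
have -> : (a - (a + b) / 2) ^+ 2 / (a + b) = m * x ^+ 2 / 2.
  by rewrite /m /x; field; apply/eqP; lra.
rewrite -/m aE bE; apply: psi0_midpoint_defect_polar; first by rewrite /m; lra.
by rewrite x_ge0.
Qed.

Lemma psi0_midpoint_defect_lin a b c : 0 <= a -> 0 <= b -> 0 <= c ->
  (psi0 a + psi0 b) / 2 + c * `|a - (a + b) / 2| <=
  psi0 ((a + b) / 2) + c ^+ 2 / 2 * ((a + b) / 2).
Proof.
move=> a0 b0 c0; have [ab0|ab_gt0] : a + b = 0 \/ 0 < a + b by lra.
  have [-> ->] : a = 0 /\ b = 0 by lra.
  by rewrite /psi0 !(mul0r, add0r, subr0, oppr0, normr0, mulr0).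
have := @psi0_midpoint_defect a b a0 b0 ab_gt0.
set d := a - (a + b) / 2 => defect.
suff : c * `|d| <= d ^+ 2 / (a + b) + c ^+ 2 / 2 * ((a + b) / 2) by lra.
rewrite -real_normK ?num_real // -(ler_pM2r ab_gt0) mulrDl divfK ?gt_eqF //.
have := sqr_ge0 (`|d| - c * (a + b) / 2); nra.
Qed.
End psi0_defect.

Lemma ge0_integral_lincomb d (T : measurableType d) (R : realType)
    (mu : {measure set T -> \bar R}) (D : set T) (f g : T -> R) (a b : R) :
  measurable D -> 0 <= a -> 0 <= b -> measurable_fun D f -> measurable_fun D g ->
  (forall t, D t -> 0 <= f t) -> (forall t, D t -> 0 <= g t) ->
  (\int[mu]_(t in D) (a * f t + b * g t)%:E =
   a%:E * \int[mu]_(t in D) (f t)%:E + b%:E * \int[mu]_(t in D) (g t)%:E)%E.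
Proof.
move=> mD a0 b0 mf mg f0 g0.
have mEf : measurable_fun D (fun t => (f t)%:E) by apply/measurable_EFinP.
have mEg : measurable_fun D (fun t => (g t)%:E) by apply/measurable_EFinP.
under eq_integral do rewrite EFinD !EFinM.
rewrite ge0_integralD //.
- by rewrite !ge0_integralZl_EFin.
- by move=> t /f0 ft; rewrite mule_ge0 ?lee_fin.
- exact: measurable_funeM.
- by move=> t /g0 gt; rewrite mule_ge0 ?lee_fin.
- exact: measurable_funeM.
Qed.

Section distribution_functions.
Context {R : realType}.
Local Notation D := (`[0%R, +oo[%classic : set R).
Implicit Types M : R -> R.

Lemma distribution_function_01 {M t} : distribution_function M -> D t -> 0 <= M t <= 1.
Proof. by move=> [M01 _]; rewrite /= in_itv /= andbT; apply: M01. Qed.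

Lemma measurable_distribution {M} : distribution_function M -> measurable_fun D M.
Proof.
move=> [_ Mnincr].
(* M is only known to be monotone on [0, +oo[: extend it by M 0 to the left *)
apply: (@eq_measurable_fun _ _ _ _ D (fun t : R => M (Order.max t 0%R))).
  by move=> t; rewrite inE /= in_itv /= andbT => t0; rewrite max_l.
apply: nonincreasing_measurable => // s t st.
by apply: Mnincr; rewrite ?ge_max !le_max ?st lexx !orbT.
Qed.

Lemma measurable_psi0_distribution {M} :
  distribution_function M -> measurable_fun D (fun t => psi0 (M t)).
Proof.
move=> dfM; have mM := measurable_distribution dfM.
apply: (eq_measurable_fun (fun t => M t - M t * ln (M t))).
  move=> t; rewrite inE => Dt.
  by rewrite psi0E //; case/andP: (distribution_function_01 dfM Dt).
by apply: measurable_funB => //; apply: measurable_funM => //; apply: measurableT_comp.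
Qed.

Lemma integrable_distribution {M} : distribution_function M -> (uN M < +oo)%E ->
  lebesgue_measure.-integrable D (EFin \o M).
Proof.
move=> dfM uMfin; apply/integrableP; split.
  by apply/measurable_EFinP; exact: measurable_distribution dfM.
rewrite (le_lt_trans _ uMfin) // le_eqVlt; apply/orP; left; apply/eqP.
apply: eq_integral => t /[!inE] Dt /=.
by rewrite ger0_norm //; case/andP: (distribution_function_01 dfM Dt).
Qed.
End distribution_functions.

Section midpoint_defect.
Context {R : realType} {N N1 N2 : R -> R}.
Hypotheses (dfN : distribution_function N) (dfN1 : distribution_function N1)
  (dfN2 : distribution_function N2).
Hypothesis NE : forall t, 0 <= t -> N t = (N1 t + N2 t) / 2.
Hypotheses (uN1_fin : (uN N1 < +oo)%E) (uN2_fin : (uN N2 < +oo)%E).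
Local Notation D := (`[0%R, +oo[%classic : set R).
Local Notation mu := (@lebesgue_measure R).

(* stated on the carrier of lebesgue_measure, whose measurable structure has a
   different display from the canonical one on R *)
Let mD : measurable (D : set (measurableTypeR R)). Proof. exact: measurable_itv. Qed.

Let NE_in t : D t -> N t = (N1 t + N2 t) / 2.
Proof. by rewrite /= in_itv /= andbT; apply: NE. Qed.

Let N_01 {t} : D t -> 0 <= N t <= 1. Proof. exact: distribution_function_01. Qed.
Let N1_01 {t} : D t -> 0 <= N1 t <= 1. Proof. exact: distribution_function_01. Qed.
Let N2_01 {t} : D t -> 0 <= N2 t <= 1. Proof. exact: distribution_function_01. Qed.

Let le_integrable_sum (f : R -> R) : measurable_fun D f ->
  (forall t, D t -> `|f t| <= N1 t + N2 t) -> mu.-integrable D (EFin \o f).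
Proof.
move=> mf fle; have int12 := integrableD mD
  (integrable_distribution dfN1 uN1_fin) (integrable_distribution dfN2 uN2_fin).
apply: (le_integrable mD _ _ int12); first exact/measurable_EFinP.
move=> t Dt /=; rewrite lee_fin; apply: le_trans (fle t Dt) _.
have /andP[N1t _] := N1_01 Dt; have /andP[N2t _] := N2_01 Dt.
by rewrite ger0_norm ?addr_ge0.
Qed.

Let measurable_EFin_lincomb a b {f g : R -> R} :
  measurable_fun D f -> measurable_fun D g ->
  measurable_fun D (EFin \o fun t => a * f t + b * g t).
Proof.
by move=> mf mg; apply/measurable_EFinP; apply: measurable_funD; apply: measurable_funM.
Qed.

Lemma uN_midpoint_fin : uN N \is a fin_num.
Proof.
apply: (integrable_fin_num mD); apply: le_integrable_sum.
  exact: measurable_distribution.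
move=> t Dt; have /andP[N1t _] := N1_01 Dt; have /andP[N2t _] := N2_01 Dt.
rewrite NE_in // ger0_norm; lra.
Qed.

Lemma integrable_midpoint_dev : mu.-integrable D (EFin \o (fun t => N1 t - N t)).
Proof.
apply: le_integrable_sum.
  by apply: measurable_funB; apply: measurable_distribution.
move=> t Dt; have /andP[N1t _] := N1_01 Dt; have /andP[N2t _] := N2_01 Dt.
rewrite NE_in // ler_norml; apply/andP; split; lra.
Qed.

Let abs_dev_fin :
  (\int[mu]_(t in D) (`|N1 t - N t|)%:E)%E \is a fin_num.
Proof.
have /integrableP[_ devfin] := integrable_midpoint_dev.
by rewrite ge0_fin_numE //; apply: integral_ge0 => t _; rewrite lee_fin.
Qed.

Let measurable_abs_dev : measurable_fun D (fun t => `|N1 t - N t|).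
Proof.
have /integrableP[mdev _] := integrable_midpoint_dev.
by apply: measurableT_comp => //; apply/measurable_EFinP.
Qed.

Let measurable_avg_psi0 :
  measurable_fun D (fun t => 2^-1 * psi0 (N1 t) + 2^-1 * psi0 (N2 t)).
Proof.
have mpsi1 := measurable_psi0_distribution dfN1.
have mpsi2 := measurable_psi0_distribution dfN2.
by apply: measurable_funD; apply: measurable_funM.
Qed.

Let psi0N_ge0 t : D t -> 0 <= psi0 (N t). Proof. by move/N_01/psi0_ge0. Qed.
Let psi0N1_ge0 t : D t -> 0 <= psi0 (N1 t). Proof. by move/N1_01/psi0_ge0. Qed.
Let psi0N2_ge0 t : D t -> 0 <= psi0 (N2 t). Proof. by move/N2_01/psi0_ge0. Qed.

Let integral_avg_psi0_dev c : 0 <= c ->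
  (\int[mu]_(t in D) (1 * (2^-1 * psi0 (N1 t) + 2^-1 * psi0 (N2 t))
      + c * `|N1 t - N t|)%:E =
   (ustar N1 + ustar N2) * (2^-1)%:E +
      (c * Rintegral mu D (fun t => `|N1 t - N t|))%:E)%E.
Proof.
move=> c0; have mpsi1 := measurable_psi0_distribution dfN1.
have mpsi2 := measurable_psi0_distribution dfN2.
rewrite ge0_integral_lincomb //; last first.
  by move=> t Dt; rewrite addr_ge0 // mulr_ge0 ?invr_ge0 ?psi0N1_ge0 ?psi0N2_ge0.
rewrite ge0_integral_lincomb // mul1e EFinM /Rintegral fineK //.
by rewrite ge0_muleDl ?integral_ge0 ?(muleC (ustar _)) // => t Dt; rewrite lee_fin.
Qed.

Let integral_psi0_mid c :
  (\int[mu]_(t in D) (1 * psi0 (N t) + c ^+ 2 / 2 * N t)%:E =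
   ustar N + (c ^+ 2 / 2 * fine (uN N))%:E)%E.
Proof.
have mpsi := measurable_psi0_distribution dfN.
have mN := measurable_distribution dfN.
have N_ge0 t : D t -> 0 <= N t by move/N_01/andP=> [].
have c2_ge0 : 0 <= c ^+ 2 / 2 by rewrite divr_ge0 ?sqr_ge0.
rewrite ge0_integral_lincomb // mul1e (EFinM (c ^+ 2 / 2)) fineK //.
exact: uN_midpoint_fin.
Qed.

Lemma ustar_midpoint_defect_lin c : 0 <= c ->
  ((ustar N1 + ustar N2) * (2^-1)%:E +
     (c * Rintegral mu D (fun t => `|N1 t - N t|))%:E <=
   ustar N + (c ^+ 2 / 2 * fine (uN N))%:E)%E.
Proof.
move=> c0; rewrite -integral_avg_psi0_dev // -integral_psi0_mid.
have mlhs := measurable_EFin_lincomb 1 c measurable_avg_psi0 measurable_abs_dev.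
have mrhs := measurable_EFin_lincomb 1 (c ^+ 2 / 2)
  (measurable_psi0_distribution dfN) (measurable_distribution dfN).
apply: ge0_le_integral => // t Dt; rewrite lee_fin !mul1r.
  apply: addr_ge0; last exact: mulr_ge0.
  by apply: addr_ge0; apply: mulr_ge0; rewrite ?invr_ge0 ?psi0N1_ge0 ?psi0N2_ge0.
rewrite -mulrDr mulrC NE_in //.
have /andP[N1t _] := N1_01 Dt; have /andP[N2t _] := N2_01 Dt.
exact: psi0_midpoint_defect_lin.
Qed.
End midpoint_defect.

Theorem corollary5p2 (R : realType) (N N1 N2 : R -> R) :
  distribution_function N -> distribution_function N1 -> distribution_function N2 ->
  (forall t, 0 <= t -> N t = (N1 t + N2 t) / 2) ->
  (uN N1 < +oo)%E -> (uN N2 < +oo)%E ->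
  (0 < uN N)%E ->
  let dN := fun t => N1 t - N t in
  let du := Rintegral lebesgue_measure `[0%R, +oo[%classic dN in
  let uD := Rintegral lebesgue_measure `[0%R, +oo[%classic (fun t => `|dN t|) in
  let u := fine (uN N) in
  ((ustar N1 + ustar N2) * (2^-1)%:E + (2^-1 * (uD ^+ 2 / u))%:E <= ustar N)%E /\
  2^-1 * (du ^+ 2 / u) <= 2^-1 * (uD ^+ 2 / u).
Proof.
move=> dfN dfN1 dfN2 NE uN1_fin uN2_fin uN_gt0 dN du uD u.
have uNE : uN N = u%:E.
  by rewrite fineK // (uN_midpoint_fin dfN dfN1 dfN2 NE uN1_fin uN2_fin).
have u_gt0 : 0 < u by rewrite -lte_fin -uNE.
have uD_ge0 : 0 <= uD by apply: Rintegral_ge0.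
have du_le : `|du| <= uD.
  apply: le_normr_Rintegral; first exact: measurable_itv.
  exact: (integrable_midpoint_dev dfN dfN1 dfN2 NE).
split; last first.
  apply: ler_wpM2l; first by rewrite invr_ge0.
  apply: ler_wpM2r; first by rewrite invr_ge0 ltW.
  by rewrite -real_normK ?num_real //; apply: lerXn2r; rewrite ?nnegrE.
(* c = u_D / u minimizes c^2 u / 2 - c u_D *)
have := ustar_midpoint_defect_lin dfN dfN1 dfN2 NE uN1_fin uN2_fin (uD / u)
  (divr_ge0 uD_ge0 (ltW u_gt0)).
rewrite -/u (_ : uD / u * uD = 2^-1 * (uD ^+ 2 / u) + (uD / u) ^+ 2 / 2 * u).
  by rewrite EFinD addeA leeD2rE.
by field; rewrite gt_eqF.
Qed.
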